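(* In a sharp theory with purification, for every non-trivial system $\mathrm{A}$ there exists a positive integer $d$ such that (1) every diagonalization of the invariant state $\chi_\mathrm{A}$ consists of exactly $d$ pure states, and (2) all eigenvalues in every such diagonalization equal $1/d$.
   Context: Setting: an operational-probabilistic theory (general probabilistic theory in the circuit framework). It has systems with a symmetric associative composition $\otimes$ and a trivial system $\mathrm{I}$ ($\mathrm{I}\otimes\mathrm{A}=\mathrm{A}$); a system is non-trivial if it is not (operationally equivalent to) $\mathrm{I}$. Transformations are closed under sequential and parallel composition. States of $\mathrm{A}$ are transformations $\mathrm{I}\to\mathrm{A}$, effects are transformations $\mathrm{A}\to\mathrm{I}$, and a state $\rho$ followed by an effect $a$ gives a probability $(a|\rho)\in[0,1]$. Tests are theory-specified collections of transformations representing alternative outcomes of one experiment (observation-tests: tests made of effects); single-outcome tests are channels. States and effects span finite-dimensional real vector spaces; all sets of transformations are convex and compact. A transformation $\mathcal C$ is pure if whenever $\mathcal C=\sum_j\mathcal D_j$ with $\{\mathcal D_j\}$ outcomes of a test, each $\mathcal D_j=p_j\mathcal C$, $p_j\ge0$. A channel is reversible if it has an inverse channel. Every test can be realized as a channel followed by an observation-test on an auxiliary output. A sharp theory with purification satisfies: (Causality) every system has a unique deterministic effect $u_\mathrm{A}$, observation-tests sum to $u_\mathrm{A}$, marginals are $\mathrm{Tr}_\mathrm{B}\rho_{\mathrm{AB}}:=(\mathcal I_\mathrm{A}\otimes u_\mathrm{B})\rho_{\mathrm{AB}}$, and $\rho$ is normalized if $(u_\mathrm{A}|\rho)=1$; (Purity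 Preservation) compositions of pure transformations are pure; (Pure Sharpness) every system has a pure effect $a$ with $(a|\rho)=1$ for some state; (Purification) every normalized state has a purification (a pure normalized state of a composite whose marginal it is), unique up to a reversible channel on the purifying system. The invariant state $\chi_\mathrm{A}$ is the unique normalized state with $\mathcal U\chi_\mathrm{A}=\chi_\mathrm{A}$ for every reversible channel $\mathcal U$ on $\mathrm{A}$ (it exists and is unique in such theories). Normalized states $\{\rho_i\}$ are perfectly distinguishable if some observation-test $\{a_j\}$ has $(a_j|\rho_i)=\delta_{ij}$. A diagonalization of a normalized state $\rho$ is a decomposition $\rho=\sum_{i=1}^rp_i\alpha_i$ with $p_i>0$, $\sum_ip_i=1$, and $\{\alpha_i\}$ perfectly distinguishable normalized pure states; the $p_i$ are its eigenvalues. *)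

From HB Require Import structures.
From mathcomp Require Import all_boot all_order all_algebra.
From mathcomp Require Import all_classical all_reals all_analysis.
Set Implicit Arguments. Unset Strict Implicit. Unset Printing Implicit Defensive.
Import Order.TTheory GRing.Theory Num.Theory.
Import numFieldTopology.Exports.
Local Open Scope ring_scope.

(* Transformations A -> B are taken up to operational equivalence and       *)
(* embedded in the finite-dimensional real vector space 'rV[R]_(dimT A B)   *)
(* they span; sums are coarse-grainings, scalar multiples are rescalings.   *)
(* Tests are lists of transformations (the outcomes).                       *)

Definition castTr (R : realType) (S : Type) (d : S -> S -> nat)
  (A A' B B' : S) (eA : A = A') (eB : B = B') (x : 'rV[R]_(d A B)) :
  'rV[R]_(d A' B') :=
  match eA in _ = X return 'rV[R]_(d X B') with
  | erefl => match eB in _ = Y return 'rV[R]_(d A Y) with erefl => x end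
  end.

Record OPT (R : realType) := {
  sys : Type;
  sI : sys;
  tens : sys -> sys -> sys;
  tens1s : forall A, tens sI A = A;
  tenss1 : forall A, tens A sI = A;
  tensA : forall A B C, tens A (tens B C) = tens (tens A B) C;
  dimT : sys -> sys -> nat;
  comp : forall A B C, 'rV[R]_(dimT B C) -> 'rV[R]_(dimT A B) -> 'rV[R]_(dimT A C);
  par : forall A B C D, 'rV[R]_(dimT A B) -> 'rV[R]_(dimT C D) ->
          'rV[R]_(dimT (tens A C) (tens B D));
  idT : forall A, 'rV[R]_(dimT A A);
  swapT : forall A B, 'rV[R]_(dimT (tens A B) (tens B A));
  prob : 'rV[R]_(dimT sI sI) -> R;           (* scalars I -> I are numbers *)
  test : forall A B, seq 'rV[R]_(dimT A B) -> Prop;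
  comp_assoc : forall A B C D (h : 'rV_(dimT C D)) (g : 'rV_(dimT B C)) (f : 'rV_(dimT A B)),
      comp h (comp g f) = comp (comp h g) f;
  comp_idl : forall A B (f : 'rV_(dimT A B)), comp (idT B) f = f;
  comp_idr : forall A B (f : 'rV_(dimT A B)), comp f (idT A) = f;
  comp_linl : forall A B C (a : R) (g1 g2 : 'rV_(dimT B C)) (f : 'rV_(dimT A B)),
      comp (a *: g1 + g2) f = a *: comp g1 f + comp g2 f;
  comp_linr : forall A B C (a : R) (g : 'rV_(dimT B C)) (f1 f2 : 'rV_(dimT A B)),
      comp g (a *: f1 + f2) = a *: comp g f1 + comp g f2;
  par_linl : forall A B C D (a : R) (f1 f2 : 'rV_(dimT A B)) (g : 'rV_(dimT C D)),
      par (a *: f1 + f2) g = a *: par f1 g + par f2 g;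
  par_linr : forall A B C D (a : R) (f : 'rV_(dimT A B)) (g1 g2 : 'rV_(dimT C D)),
      par f (a *: g1 + g2) = a *: par f g1 + par f g2;
  par_comp : forall A B C A' B' C' (g : 'rV_(dimT B C)) (f : 'rV_(dimT A B))
      (g' : 'rV_(dimT B' C')) (f' : 'rV_(dimT A' B')),
      par (comp g f) (comp g' f') = comp (par g g') (par f f');
  par_id : forall A B, par (idT A) (idT B) = idT (tens A B);
  par_unitr : forall A B (f : 'rV_(dimT A B)),
      par f (idT sI) = castTr (esym (tenss1 A)) (esym (tenss1 B)) f;
  par_unitl : forall A B (f : 'rV_(dimT A B)),
      par (idT sI) f = castTr (esym (tens1s A)) (esym (tens1s B)) f;
  par_assoc : forall A B C D E F (f : 'rV_(dimT A B)) (g : 'rV_(dimT C D)) (h : 'rV_(dimT E F)),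
      par f (par g h) = castTr (esym (tensA A C E)) (esym (tensA B D F)) (par (par f g) h);
  swap_inv : forall A B, comp (swapT B A) (swapT A B) = idT (tens A B);
  swap_nat : forall A B C D (f : 'rV_(dimT A B)) (g : 'rV_(dimT C D)),
      comp (swapT B D) (par f g) = comp (par g f) (swapT A C);
  prob_lin : forall (a : R) (x y : 'rV_(dimT sI sI)), prob (a *: x + y) = a * prob x + prob y;
  prob_inj : forall x y, prob x = prob y -> x = y;
  prob_id : prob (idT sI) = 1;
  par_scal : forall A B (s : 'rV_(dimT sI sI)) (f : 'rV_(dimT A B)),
      par s f = castTr (esym (tens1s A)) (esym (tens1s B)) (prob s *: f);
  test_id : forall A, test [:: idT A];
  test_swap : forall A B, test [:: swapT A B];
  test_seq : forall A B C (s : seq 'rV_(dimT A B)) (t : seq 'rV_(dimT B C)),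
      test s -> test t -> test [seq comp g f | f <- s, g <- t];
  test_par : forall A B C D (s : seq 'rV_(dimT A B)) (t : seq 'rV_(dimT C D)),
      test s -> test t -> test [seq par f g | f <- s, g <- t];
  test_perm : forall A B (s t : seq 'rV_(dimT A B)), test s -> perm_eq s t -> test t;
  test_coarse : forall A B (f g : 'rV_(dimT A B)) s, test (f :: g :: s) -> test (f + g :: s);
  test_conv : forall A B (s t : seq 'rV_(dimT A B)) (p : R), test s -> test t ->
      size s = size t -> 0 <= p <= 1 ->
      test [seq p *: x.1 + (1 - p) *: x.2 | x <- zip s t];
  test_prob : forall (s : seq 'rV_(dimT sI sI)), test s ->
      (forall x, x \in s -> 0 <= prob x) /\ \sum_(x <- s) prob x <= 1;
  test_dilation : forall A B (s : seq 'rV_(dimT A B)), test s ->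
      exists E (C : 'rV_(dimT A (tens B E))) (e : seq 'rV_(dimT E sI)),
        test [:: C] /\ test e /\
        s = [seq castTr erefl (tenss1 B) (comp (par (idT B) a) C) | a <- e];
  transf_compact : forall A B, compact [set f : 'rV[R]_(dimT A B) | exists s, test s /\ f \in s];
  channel_compact : forall A B, compact [set f : 'rV[R]_(dimT A B) | test [:: f]]
}.

Arguments sys {R}.
Arguments sI {R}.
Arguments tens {R _}.
Arguments tenss1 {R _}.
Arguments dimT {R _}.
Arguments comp {R _ A B C}.
Arguments par {R _ A B C D}.
Arguments idT {R _}.
Arguments prob {R _}.
Arguments test {R _ A B}.

Section OPTnotions.
Variables (R : realType) (Θ : OPT R).
Local Notation Tr A B := ('rV[R]_(@dimT R Θ A B)).
Local Notation I := (sI Θ).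

Definition transf A B (f : Tr A B) : Prop := exists s, test s /\ f \in s.
Definition channel A B (f : Tr A B) : Prop := test [:: f].
Definition pr A (a : Tr A I) (rho : Tr I A) : R := prob (comp a rho).

Definition reversible A B (U : Tr A B) : Prop :=
  channel U /\ exists V : Tr B A, channel V /\ comp V U = idT A /\ comp U V = idT B.

Definition pure A B (C : Tr A B) : Prop :=
  transf C /\
  forall (s : seq (Tr A B)) (m : bitseq), test s ->
    C = \sum_(D <- mask m s) D ->
    forall D, D \in mask m s -> exists p : R, 0 <= p /\ D = p *: C.

Definition det_effect A (u : Tr A I) : Prop := channel u.

Definition normalized A (rho : Tr I A) : Prop :=
  transf rho /\ forall u : Tr A I, det_effect u -> pr u rho = 1.

Definition is_marginal A B (rho : Tr I A) (rhoAB : Tr I (tens A B)) : Prop :=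
  forall u : Tr B I, det_effect u ->
    castTr erefl (tenss1 A) (comp (par (idT A) u) rhoAB) = rho.

Definition purifies A B (rho : Tr I A) (Psi : Tr I (tens A B)) : Prop :=
  pure Psi /\ normalized Psi /\ is_marginal rho Psi.

Definition causality : Prop :=
  forall A : sys Θ,
    (exists u : Tr A I, det_effect u /\ forall u', det_effect u' -> u' = u) /\
    forall (s : seq (Tr A I)) (u : Tr A I), test s -> det_effect u -> \sum_(a <- s) a = u.

Definition purity_preservation : Prop :=
  (forall A B C (g : Tr B C) (f : Tr A B), pure f -> pure g -> pure (comp g f)) /\
  (forall A B C D (f : Tr A B) (g : Tr C D), pure f -> pure g -> pure (par f g)).

Definition pure_sharpness : Prop :=
  forall A : sys Θ, exists (a : Tr A I) (rho : Tr I A), pure a /\ transf rho /\ pr a rho = 1.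

Definition purification : Prop :=
  forall (A : sys Θ) (rho : Tr I A), normalized rho ->
    (exists (B : sys Θ) (Psi : Tr I (tens A B)), purifies rho Psi) /\
    (forall (B : sys Θ) (Psi Psi' : Tr I (tens A B)), purifies rho Psi -> purifies rho Psi' ->
       exists U : Tr B B, reversible U /\ Psi' = comp (par (idT A) U) Psi).

Definition sharp_theory_with_purification : Prop :=
  [/\ causality, purity_preservation, pure_sharpness & purification].

Definition nontrivial (A : sys Θ) : Prop := ~ exists U : Tr A I, reversible U.

Definition invariant_state A (chi : Tr I A) : Prop :=
  normalized chi /\ forall U : Tr A A, reversible U -> comp U chi = chi.

Definition perf_dist A (r : nat) (alpha : 'I_r -> Tr I A) : Prop :=
  (forall i, normalized (alpha i)) /\
  exists s : seq (Tr A I), test s /\ size s = r /\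
    forall i j : 'I_r, pr (nth 0 s j) (alpha i) = (i == j)%:R.

Definition diagonalization A (rho : Tr I A) (r : nat) (p : 'I_r -> R)
    (alpha : 'I_r -> Tr I A) : Prop :=
  [/\ forall i, 0 < p i, \sum_i p i = 1, forall i, pure (alpha i),
      perf_dist alpha & rho = \sum_i p i *: alpha i].

End OPTnotions.

From Pilot Require Import Defs.
From HB Require Import structures.
From mathcomp Require Import all_boot all_order all_algebra.
From mathcomp Require Import all_classical all_reals all_analysis.
Set Implicit Arguments. Unset Strict Implicit. Unset Printing Implicit Defensive.
Import Order.TTheory GRing.Theory Num.Theory.
Import numFieldTopology.Exports.
Local Open Scope ring_scope.

(* Purification makes the pure normalized states of A a single orbit of the
   reversible channels (all of them purify the trivial state of I). If
   chi = \sum_i p_i alpha_i is a diagonalization and beta is any pure state,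
   move beta onto alpha_i by a reversible U: since U chi = chi, the effect
   distinguishing alpha_i reads p_i on chi and at least q on any decomposition
   chi = q beta + ..., so q <= p_i. Comparing two diagonalizations in both
   directions forces all eigenvalues of all diagonalizations to be equal,
   hence to be 1/d for a common number d of terms. *)

Local Notation cmp := Defs.comp.

Section Linearity.
Variables (R : realType) (Θ : OPT R).
Local Notation Tr A B := 'rV[R]_(@dimT R Θ A B).
Local Notation I := (sI Θ).

Lemma comp_addr A B C (g : Tr B C) (f1 f2 : Tr A B) :
  cmp g (f1 + f2) = cmp g f1 + cmp g f2.
Proof. by have := comp_linr 1 g f1 f2; rewrite !scale1r. Qed.

Lemma comp_0r A B C (g : Tr B C) : cmp g (0 : Tr A B) = 0.
Proof.
have := comp_addr g (0 : Tr A B) 0; rewrite addr0 => /(congr1 (fun v => v - cmp g 0)).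
by rewrite subrr addrK.
Qed.

Lemma comp_Zr A B C (g : Tr B C) (a : R) (f : Tr A B) :
  cmp g (a *: f) = a *: cmp g f.
Proof. by have := comp_linr a g f 0; rewrite !addr0 comp_0r addr0. Qed.

Lemma comp_sumr A B C (J : Type) (s : seq J) (P : pred J) (g : Tr B C)
    (F : J -> Tr A B) :
  cmp g (\sum_(j <- s | P j) F j) = \sum_(j <- s | P j) cmp g (F j).
Proof. by apply: (big_morph (cmp g)); [exact: comp_addr | exact: comp_0r]. Qed.

Lemma prob_add (x y : Tr I I) : prob (x + y) = prob x + prob y.
Proof. by have := prob_lin 1 x y; rewrite scale1r mul1r. Qed.

Lemma prob0 : prob (0 : Tr I I) = 0.
Proof.
have := prob_add 0 0; rewrite addr0 => /(congr1 (fun v => v - prob (0 : Tr I I))).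
by rewrite subrr addrK.
Qed.

Lemma probZ (a : R) (x : Tr I I) : prob (a *: x) = a * prob x.
Proof. by have := prob_lin a x 0; rewrite !addr0 prob0 addr0. Qed.

Lemma prob_sum (J : Type) (s : seq J) (P : pred J) (F : J -> Tr I I) :
  prob (\sum_(j <- s | P j) F j) = \sum_(j <- s | P j) prob (F j).
Proof. by apply: (big_morph prob); [exact: prob_add | exact: prob0]. Qed.

Lemma pr_sum A (a : Tr A I) (n : nat) (q : 'I_n -> R) (beta : 'I_n -> Tr I A) :
  pr a (\sum_l q l *: beta l) = \sum_l q l * pr a (beta l).
Proof. by rewrite /pr comp_sumr prob_sum; under eq_bigr do rewrite comp_Zr probZ. Qed.

End Linearity.

Section Transport.
Variables (R : realType) (Θ : OPT R).
Local Notation Tr A B := 'rV[R]_(@dimT R Θ A B).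

Lemma castTr_id A B (eA : A = A) (eB : B = B) (x : Tr A B) : castTr eA eB x = x.
Proof. by rewrite (Prop_irrelevance eA erefl) (Prop_irrelevance eB erefl). Qed.

Lemma castTr_comp A A' A'' B B' B'' (eA : A = A') (eA' : A' = A'')
    (eB : B = B') (eB' : B' = B'') (x : Tr A B) :
  castTr eA' eB' (castTr eA eB x) = castTr (etrans eA eA') (etrans eB eB') x.
Proof. by case: A'' / eA'; case: B'' / eB'; case: A' / eA; case: B' / eB. Qed.

Lemma castTr_inj (A A' B B' : sys Θ) (eA : A = A') (eB : B = B') :
  injective (@castTr R _ (@dimT R Θ) A A' B B' eA eB).
Proof. by case: A' / eA; case: B' / eB. Qed.

Lemma comp_castTr A A' B B' C C' (eA : A = A') (eB : B = B') (eC : C = C')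
    (g : Tr B C) (f : Tr A B) :
  cmp (castTr eB eC g) (castTr eA eB f) = castTr eA eC (cmp g f).
Proof. by case: A' / eA; case: B' / eB; case: C' / eC. Qed.

Lemma pure_castTr A A' B B' (eA : A = A') (eB : B = B') (x : Tr A B) :
  pure x -> pure (castTr eA eB x).
Proof. by case: A' / eA; case: B' / eB. Qed.

Lemma normalized_castTr B B' (eB : B = B') (x : Tr (sI Θ) B) :
  normalized x -> normalized (castTr erefl eB x).
Proof. by case: B' / eB. Qed.

End Transport.

Section States.
Variables (R : realType) (Θ : OPT R).
Local Notation Tr A B := 'rV[R]_(@dimT R Θ A B).
Local Notation I := (sI Θ).

Lemma transf_comp A B C (g : Tr B C) (f : Tr A B) :
  transf f -> transf g -> transf (cmp g f).
Proof.
move=> [s [ts fs]] [t [tt gt]]; exists [seq cmp g f | f <- s, g <- t].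
by split; [exact: test_seq | exact: (allpairs_f (fun f g => cmp g f))].
Qed.

Lemma transf_channel A B (f : Tr A B) : channel f -> transf f.
Proof. by exists [:: f]; rewrite inE eqxx. Qed.

Lemma prob_ge0 (x : Tr I I) : transf x -> 0 <= prob x.
Proof. by move=> [s [ts xs]]; exact: (test_prob ts).1. Qed.

Lemma pr_ge0 A (a : Tr A I) (rho : Tr I A) :
  transf a -> transf rho -> 0 <= pr a rho.
Proof. by move=> ta trho; apply/prob_ge0/transf_comp. Qed.

Lemma normalized_idI : causality Θ -> normalized (idT I).
Proof.
move=> caus; split; first exact/transf_channel/test_id.
move=> u du; have [[u0 [_ u0_unique]] _] := caus I.
by rewrite (u0_unique u du) -(u0_unique _ (test_id _)) /pr comp_idr prob_id.
Qed.

Lemma purifies_idI A (x : Tr I A) : pure x -> normalized x ->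
  purifies (idT I) (castTr erefl (esym (tens1s A)) x).
Proof.
move=> px nx; split; first exact: pure_castTr.
split; first exact: normalized_castTr.
move=> u du; rewrite par_unitl comp_castTr castTr_comp castTr_id.
by apply: prob_inj; rewrite prob_id; exact: nx.2 u du.
Qed.

Lemma pure_states_transitive A (a b : Tr I A) :
  causality Θ -> purification Θ ->
  pure a -> normalized a -> pure b -> normalized b ->
  exists2 U : Tr A A, reversible U & b = cmp U a.
Proof.
move=> caus purif pa na pb nb.
have [_ purif_unique] := purif _ _ (normalized_idI caus).
have [U [rU]] := purif_unique A _ _ (purifies_idI pa na) (purifies_idI pb nb).
by rewrite par_unitl comp_castTr => /castTr_inj bE; exists U.
Qed.

End States.

Section InvariantState.
Variables (R : realType) (Θ : OPT R).
Hypotheses (caus : causality Θ) (purif : purification Θ).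
Local Notation Tr A B := 'rV[R]_(@dimT R Θ A B).
Local Notation I := (sI Θ).
Variables (A : sys Θ) (chi : Tr I A).
Hypothesis chi_inv : invariant_state chi.

Lemma diagonalization_pr r (p : 'I_r -> R) (alpha : 'I_r -> Tr I A)
    (s : seq (Tr A I)) :
  chi = \sum_i p i *: alpha i ->
  (forall i j : 'I_r, pr (nth 0 s j) (alpha i) = (i == j)%:R) ->
  forall i : 'I_r, pr (nth 0 s i) chi = p i.
Proof.
move=> chiE dist i; rewrite chiE pr_sum (bigD1 i) //= dist eqxx mulr1.
by rewrite big1 ?addr0 // => j /negbTE ji; rewrite dist ji mulr0.
Qed.

Lemma diagonalization_weight_le r (p : 'I_r -> R) (alpha : 'I_r -> Tr I A)
    n (q : 'I_n -> R) (beta : 'I_n -> Tr I A) :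
  diagonalization chi p alpha ->
  (forall l, 0 <= q l) -> (forall l, pure (beta l)) ->
  (forall l, normalized (beta l)) -> chi = \sum_l q l *: beta l ->
  forall i l, q l <= p i.
Proof.
move=> [_ _ pa [na [s [ts [ss dist]]]] chiE] q_ge0 pb nb chiE' i l0.
have [U rU alphaE] := pure_states_transitive caus purif (pb l0) (nb l0) (pa i) (na i).
set a := nth 0 s i.
have ta : transf a by exists s; split=> //; rewrite mem_nth ?ss.
have tU := transf_channel rU.1.
have -> : p i = \sum_l q l * pr a (cmp U (beta l)).
  rewrite -(diagonalization_pr chiE dist) -(chi_inv.2 U rU) chiE' comp_sumr.
  by rewrite -pr_sum; under eq_bigr do rewrite comp_Zr.
rewrite (bigD1 l0) //= -alphaE dist eqxx mulr1 lerDl.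
apply: sumr_ge0 => l _; apply: mulr_ge0 => //.
by apply: pr_ge0 => //; apply: transf_comp => //; case: (nb l).
Qed.

Lemma diagonalization_eigenvalue_eq r (p : 'I_r -> R) (alpha : 'I_r -> Tr I A)
    n (q : 'I_n -> R) (beta : 'I_n -> Tr I A) :
  diagonalization chi p alpha -> diagonalization chi q beta ->
  forall i l, p i = q l.
Proof.
move=> dp dq i l; have [p_gt0 _ pa [na _] chiE] := dp.
have [q_gt0 _ pb [nb _] chiE'] := dq.
apply/eqP; rewrite eq_le.
rewrite (diagonalization_weight_le dp (fun k => ltW (q_gt0 k)) pb nb chiE').
by rewrite (diagonalization_weight_le dq (fun k => ltW (p_gt0 k)) pa na chiE).
Qed.

Lemma diagonalization_uniform r (p : 'I_r -> R) (alpha : 'I_r -> Tr I A) :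
  diagonalization chi p alpha -> (0 < r)%N /\ forall i, p i = r%:R^-1.
Proof.
move=> dp; have [_ p_sum _ _ _] := dp.
have r_gt0 : (0 < r)%N.
  by case: r p alpha dp p_sum => // p _ _; rewrite big_ord0 => /eqP; rewrite eq_sym oner_eq0.
set i0 := Ordinal r_gt0.
have p_const i : p i = p i0 by exact: (diagonalization_eigenvalue_eq dp dp).
have p0E : r%:R * p i0 = 1.
  by rewrite mulr_natl -p_sum (eq_bigr _ (fun i _ => p_const i)) sumr_const card_ord.
have r_neq0 : r%:R != 0 :> R by rewrite pnatr_eq0 -lt0n.
by split=> // i; apply: (mulfI r_neq0); rewrite p_const p0E mulfV.
Qed.

End InvariantState.

Theorem proposition14 (R : realType) (Θ : OPT R) :
  sharp_theory_with_purification Θ ->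
  forall (A : sys Θ), nontrivial A ->
  forall chi : 'rV[R]_(dimT (sI Θ) A), invariant_state chi ->
  exists d : nat, (0 < d)%N /\
    forall (r : nat) (p : 'I_r -> R) (alpha : 'I_r -> 'rV[R]_(dimT (sI Θ) A)),
      diagonalization chi p alpha -> r = d /\ (forall i, p i = (d%:R)^-1).
Proof.
move=> [caus _ _ purif] A _ chi chi_inv.
have [[d [p0 [alpha0 dp0]]]|no_diag] := pselect (exists r p alpha,
    @diagonalization R Θ A chi r p alpha); last first.
  by exists 1%N; split=> // r p alpha dp; case: no_diag; exists r, p, alpha.
have [d_gt0 p0E] := diagonalization_uniform caus purif chi_inv dp0.
exists d; split=> // r p alpha dp.
have [r_gt0 pE] := diagonalization_uniform caus purif chi_inv dp.
have := diagonalization_eigenvalue_eq caus purif chi_inv dp dp0 (Ordinal r_gt0) (Ordinal d_gt0).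
rewrite pE p0E => /invr_inj/eqP; rewrite eqr_nat => /eqP rE.
by split=> // i; rewrite pE rE.
Qed.
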